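(* Let $\mathcal C$ be a category all of whose morphisms are monomorphisms and which has binary joins of subobjects, and let $\perp$ be an independence relation on $\mathcal C$ satisfying invariance, monotonicity, transitivity, symmetry, existence, base monotonicity and $3$-amalgamation. Then $\perp$ satisfies strong $3$-amalgamation.
   Context: A commuting square consists of objects $C,A,B,M$ and morphisms $C\to A$, $C\to B$, $A\to M$, $B\to M$ with equal composites $C\to M$. An independence relation $\perp$ is a class of commuting squares (called independent); write $A\perp^M_C B$. Properties (all diagrams commute): Invariance: for a square $C\to A,C\to B,A\to M,B\to M$ and any $M\to N$, $A\perp^M_C B$ iff the square with $A\to M\to N$, $B\to M\to N$ is independent. Monotonicity: if $A\perp^M_C B$ and $C\to B$ factors as $C\to B'\to B$, then the square $C\to A$, $C\to B'$, $A\to M$, $B'\to B\to M$ is independent. Transitivity: if $(C\to A,C\to B,A\to M,B\to M)$ and $(B\to M,B\to D,M\to N,D\to N)$ are independent then so is $(C\to A, C\to B\to D, A\to M\to N, D\to N)$. Symmetry: $A\perp^M_C B$ iff $B\perp^M_C A$. Existence: every span $A\leftarrow C\to B$ can be completed to an independent square. Base monotonicity: if $A\perp^M_C D$ and $C\to D$ factors as $C\to B\to D$, then there are $A',N$ and morphisms $A\to A'$, $B\to A'$, $A'\to N$, $M\to N$ making everything commute such that the square $B\to A'$, $B\to D$, $A'\to N$, $D\to M\to N$ is independent. A horn consists of morphisms $M\to A$, $M\to B$, $M\to C$, $A\to N_1$, $B\to N_1$, $A\to N_2$, $C\to N_2$, $B\to N_3$, $C\to N_3$ with the three squares (tops $N_1,N_2,N_3$)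 commuting; it is independent if these three squares are. $3$-amalgamation: for every independent horn there are $N$ and $N_i\to N$ ($i=1,2,3$) making the cube commute and with $A\perp^N_M N_3$ (square $M\to A$, $M\to N_3$, $A\to N$, $N_3\to N$). Strong $3$-amalgamation: for every independent horn there are $N$ and $N_i\to N$ making the cube commute and such that all six faces of the cube are independent. Binary joins of subobjects: any two subobjects of an object have a least upper bound among subobjects. *)

Set Implicit Arguments.
Unset Strict Implicit.

(** Categories, composition written in diagrammatic order: [f ;; g] is
    "first f, then g" (i.e. g ∘ f). *)
Record Category : Type := {
  Obj :> Type;
  Hom : Obj -> Obj -> Type;
  idm : forall a, Hom a a;
  comp : forall a b c, Hom a b -> Hom b c -> Hom a c;
  comp_assoc : forall a b c d (f : Hom a b) (g : Hom b c) (h : Hom c d),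
      comp (comp f g) h = comp f (comp g h);
  comp_id_l : forall a b (f : Hom a b), comp (idm a) f = f;
  comp_id_r : forall a b (f : Hom a b), comp f (idm b) = f
}.

Arguments Hom {c} _ _ : rename.
Arguments idm {c} _ : rename.
Arguments comp {c a b c0} _ _ : rename.
Notation "f ;; g" := (comp f g) (at level 40, left associativity).

Section Defs.
Variable K : Category.

Definition mono {a b : K} (m : Hom a b) : Prop :=
  forall x (u v : Hom x a), u ;; m = v ;; m -> u = v.

Definition all_mono : Prop := forall (a b : K) (m : Hom a b), mono m.

Definition factors_through {a b x : K} (m : Hom a x) (n : Hom b x) : Prop :=
  exists t : Hom a b, m = t ;; n.

Definition has_binary_joins : Prop :=
  forall (X A B : K) (a : Hom A X) (b : Hom B X), mono a -> mono b ->
    exists (J : K) (j : Hom J X),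
      mono j /\ factors_through a j /\ factors_through b j /\
      (forall (S : K) (s : Hom S X), mono s ->
         factors_through a s -> factors_through b s -> factors_through j s).

Definition commutes {C A B M : K} (f : Hom C A) (g : Hom C B)
  (h : Hom A M) (k : Hom B M) : Prop := f ;; h = g ;; k.

(** A candidate relation on squares; [Ind f g h k] means A ⊥^M_C B. *)
Definition indep_rel : Type :=
  forall (C A B M : K), Hom C A -> Hom C B -> Hom A M -> Hom B M -> Prop.

Variable Ind : indep_rel.

Definition only_commuting : Prop :=
  forall C A B M (f : Hom C A) (g : Hom C B) (h : Hom A M) (k : Hom B M),
    Ind f g h k -> commutes f g h k.

Definition invariance : Prop :=
  forall C A B M N (f : Hom C A) (g : Hom C B) (h : Hom A M) (k : Hom B M)
    (n : Hom M N),
    commutes f g h k -> (Ind f g h k <-> Ind f g (h ;; n) (k ;; n)).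

Definition monotonicity : Prop :=
  forall C A B B' M (f : Hom C A) (g : Hom C B) (h : Hom A M) (k : Hom B M)
    (g' : Hom C B') (b : Hom B' B),
    Ind f g h k -> g = g' ;; b -> Ind f g' h (b ;; k).

Definition transitivity : Prop :=
  forall C A B M D N (f : Hom C A) (g : Hom C B) (h : Hom A M) (k : Hom B M)
    (d : Hom B D) (h' : Hom M N) (e : Hom D N),
    Ind f g h k -> Ind k d h' e -> Ind f (g ;; d) (h ;; h') e.

Definition symmetry : Prop :=
  forall C A B M (f : Hom C A) (g : Hom C B) (h : Hom A M) (k : Hom B M),
    Ind f g h k <-> Ind g f k h.

Definition existence : Prop :=
  forall C A B (f : Hom C A) (g : Hom C B),
    exists (M : K) (h : Hom A M) (k : Hom B M), Ind f g h k.

Definition base_monotonicity : Prop :=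
  forall C A B D M (f : Hom C A) (d : Hom C D) (h : Hom A M) (k : Hom D M)
    (g : Hom C B) (b : Hom B D),
    Ind f d h k -> d = g ;; b ->
    exists (A' N : K) (u : Hom A A') (v : Hom B A') (p : Hom A' N) (q : Hom M N),
      f ;; u = g ;; v /\ u ;; p = h ;; q /\ v ;; p = b ;; (k ;; q) /\
      Ind v b p (k ;; q).

Definition horn {M A B C N1 N2 N3 : K} (a : Hom M A) (b : Hom M B) (c : Hom M C)
  (a1 : Hom A N1) (b1 : Hom B N1) (a2 : Hom A N2) (c2 : Hom C N2)
  (b3 : Hom B N3) (c3 : Hom C N3) : Prop :=
  commutes a b a1 b1 /\ commutes a c a2 c2 /\ commutes b c b3 c3.

Definition indep_horn {M A B C N1 N2 N3 : K} (a : Hom M A) (b : Hom M B)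
  (c : Hom M C) (a1 : Hom A N1) (b1 : Hom B N1) (a2 : Hom A N2) (c2 : Hom C N2)
  (b3 : Hom B N3) (c3 : Hom C N3) : Prop :=
  horn a b c a1 b1 a2 c2 b3 c3 /\
  Ind a b a1 b1 /\ Ind a c a2 c2 /\ Ind b c b3 c3.

Definition cube_commutes {M A B C N1 N2 N3 N : K} (a : Hom M A) (b : Hom M B)
  (c : Hom M C) (a1 : Hom A N1) (b1 : Hom B N1) (a2 : Hom A N2) (c2 : Hom C N2)
  (b3 : Hom B N3) (c3 : Hom C N3) (n1 : Hom N1 N) (n2 : Hom N2 N)
  (n3 : Hom N3 N) : Prop :=
  commutes a1 a2 n1 n2 /\ commutes b1 b3 n1 n3 /\ commutes c2 c3 n2 n3.

Definition three_amalgamation : Prop :=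
  forall M A B C N1 N2 N3 (a : Hom M A) (b : Hom M B) (c : Hom M C)
    (a1 : Hom A N1) (b1 : Hom B N1) (a2 : Hom A N2) (c2 : Hom C N2)
    (b3 : Hom B N3) (c3 : Hom C N3),
    indep_horn a b c a1 b1 a2 c2 b3 c3 ->
    exists (N : K) (n1 : Hom N1 N) (n2 : Hom N2 N) (n3 : Hom N3 N),
      cube_commutes a b c a1 b1 a2 c2 b3 c3 n1 n2 n3 /\
      (* A ⊥^N_M N3, square M -> A, M -> N3 (= b;;b3 = c;;c3), A -> N, N3 -> N *)
      Ind a (b ;; b3) (a1 ;; n1) n3.

Definition strong_three_amalgamation : Prop :=
  forall M A B C N1 N2 N3 (a : Hom M A) (b : Hom M B) (c : Hom M C)
    (a1 : Hom A N1) (b1 : Hom B N1) (a2 : Hom A N2) (c2 : Hom C N2)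
    (b3 : Hom B N3) (c3 : Hom C N3),
    indep_horn a b c a1 b1 a2 c2 b3 c3 ->
    exists (N : K) (n1 : Hom N1 N) (n2 : Hom N2 N) (n3 : Hom N3 N),
      cube_commutes a b c a1 b1 a2 c2 b3 c3 n1 n2 n3 /\
      Ind a b a1 b1 /\ Ind a c a2 c2 /\ Ind b c b3 c3 /\
      Ind a1 a2 n1 n2 /\ Ind b1 b3 n1 n3 /\ Ind c2 c3 n2 n3.

End Defs.


(* 3-amalgamation gives a commuting cube with [A ⊥_M N3].  The key move turns
   an independence [X ⊥_M D] whose base map [M -> D] factors through an edge
   [Y] into [D ⊥_Y E] for a top vertex [E] containing [X] and [Y]: base
   monotonicity enlarges [X] to [X'] over [Y], the join of [X] and [Y] lies
   below both [X'] and [E], monotonicity restricts to that join, and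
   amalgamating along it (existence + transitivity) yields the face.
   Starting from [A ⊥_M N3] this gives the face over [B]; transitivity with
   that face gives [C ⊥_M N1] and [A ⊥_M N3] again, and rebasing both onto
   [N2] with a single join gives the faces over [A] and [C] while the first
   face survives by invariance. *)

Lemma comp_eq_r (K : Category) (x y z w v : K) (f : Hom x y) (g : Hom y w)
  (h : Hom x z) (k : Hom z w) (r : Hom w v) :
  f ;; g = h ;; k -> f ;; (g ;; r) = h ;; (k ;; r).
Proof. intro E. rewrite <- !comp_assoc, E. reflexivity. Qed.
Arguments comp_eq_r {K x y z w v f g h k} r _.

Section Joins.
Variable K : Category.

(* When all morphisms are mono, [j] is the join of the subobjects [bJ ;; j]
   and [cJ ;; j] of [X]. *)
Definition is_join (X B C J : K) (j : Hom J X) (bJ : Hom B J) (cJ : Hom C J) :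
  Prop :=
  forall (P : K) (p : Hom P X) (uB : Hom B P) (uC : Hom C P),
    uB ;; p = bJ ;; j -> uC ;; p = cJ ;; j ->
    exists s : Hom J P, bJ ;; s = uB /\ cJ ;; s = uC /\ s ;; p = j.
Arguments is_join {X B C J} j bJ cJ.

Lemma is_join_sym (X B C J : K) (j : Hom J X) (bJ : Hom B J) (cJ : Hom C J) :
  is_join j bJ cJ -> is_join j cJ bJ.
Proof.
  intros HJ P p uC uB EC EB.
  destruct (HJ P p uB uC EB EC) as [s Es].
  exists s. tauto.
Qed.
Arguments is_join_sym {X B C J j bJ cJ} _.

Hypothesis mono_all : all_mono K.
Hypothesis joins : has_binary_joins K.
Arguments mono_all {a b} m.
Arguments joins {X A B} a b _ _.

Lemma join_exists (X B C : K) (xB : Hom B X) (xC : Hom C X) :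
  exists (J : K) (j : Hom J X) (bJ : Hom B J) (cJ : Hom C J),
    bJ ;; j = xB /\ cJ ;; j = xC /\ is_join j bJ cJ.
Proof.
  destruct (joins xB xC (mono_all _) (mono_all _))
    as [J [j [_ [[bJ EbJ] [[cJ EcJ] join_least]]]]].
  exists J, j, bJ, cJ. split; [|split]; [congruence | congruence |].
  intros P p uB uC EB EC.
  destruct (join_least P p (mono_all p)) as [s Es].
  { exists uB. congruence. }
  { exists uC. congruence. }
  exists s. split; [|split].
  - apply (mono_all p). rewrite comp_assoc, <- Es. congruence.
  - apply (mono_all p). rewrite comp_assoc, <- Es. congruence.
  - symmetry. exact Es.
Qed.

End Joins.

Arguments is_join {K X B C J} j bJ cJ.
Arguments is_join_sym {K X B C J j bJ cJ} _.
Arguments join_exists {K} mono_all joins {X B C} xB xC.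

Section Independence.
Variable K : Category.
Variable Ind : indep_rel K.
Arguments Ind {C A B M} _ _ _ _.
Hypothesis mono_all : all_mono K.
Hypothesis joins : has_binary_joins K.
Hypothesis ind_commutes : only_commuting (@Ind).
Hypothesis ind_invariance : invariance (@Ind).
Hypothesis ind_monotonicity : monotonicity (@Ind).
Hypothesis ind_transitivity : transitivity (@Ind).
Hypothesis ind_symmetry : symmetry (@Ind).
Hypothesis ind_existence : existence (@Ind).
Hypothesis ind_base_monotonicity : base_monotonicity (@Ind).
Arguments ind_commutes {C A B M f g h k} _.
Arguments ind_invariance {C A B M N f g h k} n _.
Arguments ind_monotonicity {C A B B' M f g h k g' b} _ _.
Arguments ind_transitivity {C A B M D N f g h k d h' e} _ _.
Arguments ind_symmetry {C A B M f g h k}.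
Arguments ind_existence {C A B} f g.
Arguments ind_base_monotonicity {C A B D M f d h k g b} _ _.

Lemma indep_comp_r (C A B M N : K) (f : Hom C A) (g : Hom C B) (h : Hom A M)
    (k : Hom B M) (n : Hom M N) :
  Ind f g h k -> Ind f g (h ;; n) (k ;; n).
Proof. intro I. exact (proj1 (ind_invariance n (ind_commutes I)) I). Qed.
Arguments indep_comp_r {C A B M N f g h k} n _.

(* [N'] comes from base monotonicity, with some [B'] above [B] and [C] and
   [D ⊥_C B']; [B'] stays above the join of [B] and [C] taken in any further
   extension, so monotonicity restricts the independence to that join. *)
Lemma indep_base_join (M B C D N : K) (b : Hom M B) (c : Hom M C) (e : Hom C D)
    (h : Hom B N) (k : Hom D N) :
  Ind b (c ;; e) h k ->
  exists (N' : K) (q : Hom N N'),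
    forall (N'' : K) (q' : Hom N' N'') (J : K) (j : Hom J N'')
      (bJ : Hom B J) (cJ : Hom C J),
      bJ ;; j = h ;; (q ;; q') -> cJ ;; j = e ;; (k ;; (q ;; q')) ->
      is_join j bJ cJ -> Ind e cJ (k ;; (q ;; q')) j.
Proof.
  intro I.
  destruct (ind_base_monotonicity I eq_refl)
    as [B' [N' [u [v [p [q [_ [Eu [Ev Ibase]]]]]]]]].
  exists N', q. intros N'' q' J j bJ cJ EbJ EcJ HJ.
  destruct (HJ B' (p ;; q') u v) as [s [_ [Es Esj]]].
  { rewrite EbJ, <- comp_assoc, Eu, comp_assoc. reflexivity. }
  { rewrite EcJ, <- comp_assoc, Ev, !comp_assoc. reflexivity. }
  rewrite <- Esj, <- comp_assoc.
  apply (ind_monotonicity (proj1 ind_symmetry (indep_comp_r q' Ibase))).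
  symmetry. exact Es.
Qed.
Arguments indep_base_join {M B C D N b c e h k} _.

Lemma indep_transport (J N E : K) (j : Hom J N) (t : Hom J E) :
  exists (R : K) (r : Hom N R) (s : Hom E R),
    j ;; r = t ;; s /\
    forall (C D : K) (e : Hom C D) (cJ : Hom C J) (k : Hom D N),
      Ind e cJ k j -> Ind e (cJ ;; t) (k ;; r) s.
Proof.
  destruct (ind_existence j t) as [R [r [s Iamalg]]].
  exists R, r, s. split.
  - exact (ind_commutes Iamalg).
  - intros C D e cJ k I. exact (ind_transitivity I Iamalg).
Qed.
Arguments indep_transport {J N E} j t.

(* Moving the base of [B ⊥^N_M D] from [M] to [C], along a subobject [E] of
   [N] containing [B] and [C]: the result is [D ⊥_C E]. *)
Lemma indep_rebase (M B C D N E : K) (b : Hom M B) (c : Hom M C) (e : Hom C D)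
    (h : Hom B N) (k : Hom D N) (x : Hom B E) (y : Hom C E) (m : Hom E N) :
  Ind b (c ;; e) h k -> x ;; m = h -> y ;; m = e ;; k ->
  exists (R : K) (r : Hom N R) (s : Hom E R),
    Ind e y (k ;; r) s /\ x ;; s = h ;; r.
Proof.
  intros I Ex Ey.
  destruct (indep_base_join I) as [N' [q Hq]].
  destruct (join_exists mono_all joins (x ;; (m ;; q)) (y ;; (m ;; q)))
    as [J [j [bJ [cJ [EbJ [EcJ HJ]]]]]].
  destruct (HJ E (m ;; q) x y (eq_sym EbJ) (eq_sym EcJ)) as [t [Ebt [Ect _]]].
  destruct (indep_transport j t) as [R [r [s [Ejs Htr]]]].
  assert (IJ : Ind e cJ (k ;; (q ;; idm _)) j).
  { apply (Hq _ (idm _) J j bJ cJ); [| |exact HJ]; rewrite comp_id_r.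
    - rewrite EbJ, <- Ex, comp_assoc. reflexivity.
    - rewrite EcJ. exact (comp_eq_r q Ey). }
  exists R, ((q ;; idm _) ;; r), s. split.
  - rewrite <- Ect, <- comp_assoc. exact (Htr _ _ _ _ _ IJ).
  - rewrite <- Ebt, comp_assoc, <- Ejs, <- comp_assoc, EbJ, <- Ex, comp_id_r,
      !comp_assoc. reflexivity.
Qed.
Arguments indep_rebase {M B C D N E b c e h k} x y m _ _ _.

Lemma indep_rebase2 (M B C D1 D2 N E : K) (b : Hom M B) (c : Hom M C)
    (e1 : Hom C D1) (e2 : Hom B D2) (h1 : Hom B N) (k1 : Hom D1 N)
    (h2 : Hom C N) (k2 : Hom D2 N) (x : Hom B E) (y : Hom C E) (m : Hom E N) :
  Ind b (c ;; e1) h1 k1 -> Ind c (b ;; e2) h2 k2 ->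
  x ;; m = h1 -> y ;; m = e1 ;; k1 -> y ;; m = h2 -> x ;; m = e2 ;; k2 ->
  exists (R : K) (r : Hom N R) (s : Hom E R),
    Ind e1 y (k1 ;; r) s /\ Ind e2 x (k2 ;; r) s.
Proof.
  intros I1 I2 Ex1 Ey1 Ey2 Ex2.
  destruct (indep_base_join I1) as [N' [q Hq]].
  destruct (indep_base_join (indep_comp_r q I2)) as [N'' [q2 Hq2]].
  destruct (join_exists mono_all joins (x ;; (m ;; (q ;; q2)))
              (y ;; (m ;; (q ;; q2)))) as [J [j [bJ [cJ [EbJ [EcJ HJ]]]]]].
  destruct (HJ E (m ;; (q ;; q2)) x y (eq_sym EbJ) (eq_sym EcJ))
    as [t [Ebt [Ect _]]].
  destruct (indep_transport j t) as [R [r [s [_ Htr]]]].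
  assert (IJ1 : Ind e1 cJ (k1 ;; (q ;; q2)) j).
  { apply (Hq _ q2 J j bJ cJ); [| |exact HJ].
    - rewrite EbJ, <- Ex1, !comp_assoc. reflexivity.
    - rewrite EcJ. exact (comp_eq_r _ Ey1). }
  assert (IJ2 : Ind e2 bJ ((k2 ;; q) ;; (q2 ;; idm _)) j).
  { apply (Hq2 _ (idm _) J j cJ bJ); [| |exact (is_join_sym HJ)];
      rewrite comp_id_r, ?comp_assoc.
    - rewrite EcJ, <- Ey2, !comp_assoc. reflexivity.
    - rewrite EbJ, <- comp_assoc, Ex2, !comp_assoc. reflexivity. }
  exists R, ((q ;; q2) ;; r), s. split.
  - rewrite <- Ect, <- comp_assoc. exact (Htr _ _ _ _ _ IJ1).
  - rewrite <- Ebt. pose proof (Htr _ _ _ _ _ IJ2) as I.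
    rewrite comp_id_r, !comp_assoc in I. rewrite !comp_assoc. exact I.
Qed.
Arguments indep_rebase2 {M B C D1 D2 N E b c e1 e2 h1 k1 h2 k2} x y m _ _ _ _ _ _.

Section Horn.
Variables (M A B C N1 N2 N3 : K) (a : Hom M A) (b : Hom M B) (c : Hom M C).
Variables (a1 : Hom A N1) (b1 : Hom B N1) (a2 : Hom A N2) (c2 : Hom C N2).
Variables (b3 : Hom B N3) (c3 : Hom C N3).
Hypothesis horn_indep : indep_horn (@Ind) a b c a1 b1 a2 c2 b3 c3.

Notation cube := (cube_commutes a b c a1 b1 a2 c2 b3 c3).

Lemma cube_indep_face_b (N : K) (n1 : Hom N1 N) (n2 : Hom N2 N) (n3 : Hom N3 N) :
  cube n1 n2 n3 -> Ind a (b ;; b3) (a1 ;; n1) n3 ->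
  exists (R : K) (n1' : Hom N1 R) (n2' : Hom N2 R) (n3' : Hom N3 R),
    cube n1' n2' n3' /\ Ind b1 b3 n1' n3'.
Proof.
  intros [E12 [E13 E23]] I.
  destruct (indep_rebase a1 b1 n1 I eq_refl E13) as [R [r [s [Ib Es]]]].
  exists R, s, (n2 ;; r), (n3 ;; r). unfold cube_commutes, commutes.
  split; [split; [|split]|].
  - rewrite Es, comp_assoc. exact (comp_eq_r r E12).
  - symmetry. exact (ind_commutes Ib).
  - exact (comp_eq_r r E23).
  - exact (proj1 ind_symmetry Ib).
Qed.

(* The faces over [A] and [C] share the top vertex [N2], so they must be
   produced together, by one rebase onto [N2]. *)
Lemma cube_indep_faces_a_c (N : K) (n1 : Hom N1 N) (n2 : Hom N2 N)
    (n3 : Hom N3 N) :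
  cube n1 n2 n3 -> Ind b1 b3 n1 n3 ->
  exists (R : K) (n1' : Hom N1 R) (n2' : Hom N2 R) (n3' : Hom N3 R),
    cube n1' n2' n3' /\
    Ind a1 a2 n1' n2' /\ Ind b1 b3 n1' n3' /\ Ind c2 c3 n2' n3'.
Proof.
  destruct horn_indep as [[Hab [_ Hbc]] [Iab [_ Ibc]]].
  unfold commutes in Hab, Hbc.
  intros [E12 [E13 E23]] Ib.
  pose proof (ind_transitivity (proj1 ind_symmetry Ibc) (proj1 ind_symmetry Ib))
    as I1.
  pose proof (ind_transitivity Iab Ib) as I2.
  rewrite <- Hab in I1. rewrite Hbc in I2.
  destruct (indep_rebase2 c2 a2 n2 I1 I2 E23 (eq_sym E12) (eq_sym E12) E23)
    as [R [r [s [Ia Ic]]]].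
  exists R, (n1 ;; r), s, (n3 ;; r). unfold cube_commutes, commutes.
  split; [split; [|split]|split; [|split]].
  - exact (ind_commutes Ia).
  - exact (comp_eq_r r E13).
  - symmetry. exact (ind_commutes Ic).
  - exact Ia.
  - exact (indep_comp_r r Ib).
  - exact (proj1 ind_symmetry Ic).
Qed.

End Horn.
Arguments cube_indep_face_b {M A B C N1 N2 N3 a b c a1 b1 a2 c2 b3 c3 N n1 n2 n3}
  _ _.
Arguments cube_indep_faces_a_c
  {M A B C N1 N2 N3 a b c a1 b1 a2 c2 b3 c3} _ {N n1 n2 n3} _ _.

Lemma strong_three_amalgamation_of_three_amalgamation :
  three_amalgamation (@Ind) -> strong_three_amalgamation (@Ind).
Proof.
  intros amalg M A B C N1 N2 N3 a b c a1 b1 a2 c2 b3 c3 Hhorn.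
  destruct (amalg _ _ _ _ _ _ _ _ _ _ _ _ _ _ _ _ Hhorn)
    as [N [n1 [n2 [n3 [Hcube Ia3]]]]].
  destruct (cube_indep_face_b Hcube Ia3) as [N' [n1' [n2' [n3' [Hcube' Ib]]]]].
  destruct (cube_indep_faces_a_c Hhorn Hcube' Ib)
    as [R [m1 [m2 [m3 [HR [Ia [Ib' Ic]]]]]]].
  destruct Hhorn as [_ [Iab [Iac Ibc]]].
  exists R, m1, m2, m3. split; [exact HR|]. repeat split; assumption.
Qed.

End Independence.

Theorem theorem6p2 (K : Category) (Ind : indep_rel K) :
  all_mono K ->
  has_binary_joins K ->
  only_commuting Ind ->
  invariance Ind ->
  monotonicity Ind ->
  transitivity Ind ->
  symmetry Ind ->
  existence Ind ->
  base_monotonicity Ind ->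
  three_amalgamation Ind ->
  strong_three_amalgamation Ind.
Proof. exact (@strong_three_amalgamation_of_three_amalgamation K Ind). Qed.
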